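(* Let $k\in\{2,3\}$, let $C$ and $C'$ be configurations of g-$k$PATH, let $v\in C$, and let $t\ge0$ be an integer with $\mathrm{d}_C(\mathbf{0},v)\le t$. Then $C\equiv'_{t,v}C'$ if and only if $C'$ is a consistent extension of the subset $M(v,t,C)$ of $C$.
   Context: Positions are elements of $\mathbb{Z}^k$; $\mathbf 0$ is the origin. Let $\epsilon_0,\dots,\epsilon_{2k-1}$ be the $2k$ vectors $\pm e_1,\dots,\pm e_k$ (unit coordinate vectors and their negatives) in a fixed order; positions $p,p'$ are adjacent if $p'-p$ is one of them. A configuration of g-$k$PATH is a sequence $p_r p_{r+1}\dots p_s$ ($r\le0\le s$) of positions with $p_0=\mathbf 0$, $p_l$ and $p_{l+1}$ adjacent for all $r\le l<s$, all $p_l$ distinct, and $p_l,p_m$ not adjacent whenever $|l-m|\ge2$; it is identified with its set of positions. For a configuration $C$ and $p,p'\in C$, $\mathrm{d}_C(p,p')$ is the number of steps of a shortest path from $p$ to $p'$ inside $C$ (consecutive positions adjacent). For $p\in C$, $\mathrm{bc}_C(p)=(b_0,\dots,b_{2k-1})\in\{0,1\}^{2k}$ with $b_i=1$ iff $p+\epsilon_i\in C$. $\mathrm{ai}(v,t,C)$ is the symbol $\mathrm{Q}$ if $\mathrm{d}_C(\mathbf 0,v)>t$, and otherwise the triple $(t,v,\{(v',\mathrm{bc}_C(v')) : v'\in C,\ \mathrm{d}_C(\mathbf 0,v')+\mathrm{d}_C(v',v)\le t\})$. $C\equiv'_{t,v}C'$ means $v\in C\cap C'$ and $\mathrm{ai}(v,t,C)=\mathrm{ai}(v,t,C')\neq\mathrm{Q}$.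 $M(v,t,C)=\{v'\in C:\mathrm{d}_C(\mathbf 0,v')+\mathrm{d}_C(v',v)\le t\}$. $C'$ is a consistent extension of a subset $M$ of $C$ if $M\subseteq C'$ and $\mathrm{bc}_C(w)=\mathrm{bc}_{C'}(w)$ for all $w\in M$. *)

From mathcomp Require Import all_boot all_algebra.
From mathcomp Require Import boolp.
Set Implicit Arguments. Unset Strict Implicit. Unset Printing Implicit Defensive.
Local Open Scope ring_scope.

Section GkPath.
Variable k : nat.

Definition pos := {ffun 'I_k -> int}.
Definition origin : pos := [ffun => 0].
Definition padd (p q : pos) : pos := [ffun j => p j + q j].

(* the 2k vectors eps_0..eps_{2k-1}, fixed order: +e_0,..,+e_{k-1},-e_0,..,-e_{k-1} *)
Definition eps (i : 'I_(k + k)) : pos :=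
  match split i with
  | inl a => [ffun j => ((j == a) : nat)%:Z]
  | inr a => [ffun j => - ((j == a) : nat)%:Z]
  end.

Definition adjacent (p p' : pos) : Prop := exists i, p' = padd p (eps i).

Definition is_config (s : seq pos) : Prop :=
  [/\ exists2 i, (i < size s)%N & nth origin s i = origin,
      (forall l, (l.+1 < size s)%N -> adjacent (nth origin s l) (nth origin s l.+1)),
      uniq s &
      (forall l m, (l < size s)%N -> (m < size s)%N -> (l.+1 < m \/ m.+1 < l)%N ->
          ~ adjacent (nth origin s l) (nth origin s m))].

Definition walk (C : seq pos) (p p' : pos) (n : nat) : Prop :=
  exists w : seq pos, [/\ size w = n.+1, nth origin w 0 = p, nth origin w n = p',
    (forall j, (j <= n)%N -> nth origin w j \in C) &
    (forall j, (j < n)%N -> adjacent (nth origin w j) (nth origin w j.+1))].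

Definition connected_in (C : seq pos) (p p' : pos) : Prop := exists n, walk C p p' n.

Lemma connected_in_ex C p p' : connected_in C p p' -> exists n, `[< walk C p p' n >].
Proof. by case=> n Hn; exists n; apply/asboolP. Qed.

(* d_C(p,p'): number of steps of a shortest path from p to p' inside C
   (only meaningful when such a path exists; 0 otherwise) *)
Definition dC (C : seq pos) (p p' : pos) : nat :=
  match pselect (connected_in C p p') with
  | left H => ex_minn (connected_in_ex H)
  | right _ => 0%N
  end.

Definition bcT := {ffun 'I_(k + k) -> bool}.
Definition bc (C : seq pos) (p : pos) : bcT := [ffun i => padd p (eps i) \in C].

Definition Mset (v : pos) (t : nat) (C : seq pos) : pos -> Prop :=
  fun v' => v' \in C /\ (dC C origin v' + dC C v' v <= t)%N.

(* ai(v,t,C): None encodes the symbol Q (d_C(0,v) > t, or v unreachable) *)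
Definition ai (v : pos) (t : nat) (C : seq pos)
  : option (nat * pos * (pos * bcT -> Prop)) :=
  if `[< connected_in C origin v /\ (dC C origin v <= t)%N >] then
    Some (t, v, fun x => Mset v t C x.1 /\ x.2 = bc C x.1)
  else None.

Definition equiv' (t : nat) (v : pos) (C C' : seq pos) : Prop :=
  [/\ v \in C, v \in C', ai v t C = ai v t C' & ai v t C <> None].

Definition consistent_extension (C' : seq pos) (M : pos -> Prop) (C : seq pos) : Prop :=
  (forall w, M w -> w \in C') /\ (forall w, M w -> bc C w = bc C' w).

End GkPath.

(* In a configuration only positions with consecutive indices are adjacent, so
   d_C is the distance of indices and M(v,t,C) is the segment of C whose indices
   i satisfy |i - i_0| + |i - i_v| <= t.  If C' contains this segment, consecutive
   elements of the segment stay adjacent, hence consecutive in C'; an injective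
   map of a segment with steps of length one has slope +1 or -1, so distances to
   0 and to v inside the segment are the same in C and C'.  Where the segment of C
   stops because C ends, the equal bond codes force C' to end as well; elsewhere
   it stops because the ellipse condition fails, and it fails at the same place in
   C'.  Hence M(v,t,C') = M(v,t,C), and the bond codes agree on it. *)

From mathcomp Require Import all_boot all_algebra.
From mathcomp Require Import boolp.
From mathcomp Require Import zify.

Set Implicit Arguments. Unset Strict Implicit. Unset Printing Implicit Defensive.

Import GRing.Theory.

Section Configurations.
Variable k : nat.
Implicit Types (C : seq (pos k)) (p q : pos k).

Lemma adjacent_sym p q : adjacent p q -> adjacent q p.
Proof.
case=> i ->; exists (unsplit (match split i with inl a => inr a | inr a => inl a end)).
apply/ffunP => x; rewrite /padd /eps !ffunE unsplitK.
by case: (split i) => a; rewrite !ffunE ?addrK ?subrK.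
Qed.

Lemma adjacent_irr p : ~ adjacent p p.
Proof.
case=> i /ffunP.
case E: (split i) => [a|a] /(_ a); rewrite /eps E !ffunE eqxx /=;
  by move/eqP; rewrite -{1}(addr0 (p a)) (inj_eq (addrI _)).
Qed.

Lemma bc_adjacent_mem C1 C2 p q :
  bc C1 p = bc C2 p -> adjacent p q -> (q \in C1) = (q \in C2).
Proof. by move=> /ffunP E [i ->]; move: (E i); rewrite !ffunE. Qed.

Lemma config_uniq C : is_config C -> uniq C.
Proof. by case. Qed.

Lemma config_origin C : is_config C -> origin k \in C.
Proof. by case=> -[i hi <-] *; apply: mem_nth. Qed.

Lemma config_adjacent_nth C l m : is_config C -> l < size C -> m < size C ->
  adjacent (nth (origin k) C l) (nth (origin k) C m) <-> `|l - m| = 1.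
Proof.
case=> _ hstep _ hfar hl hm; split=> [hadj | hlm].
- have [eq_lm | neq_lm] := eqVneq l m.
    by move: hadj; rewrite eq_lm => /adjacent_irr.
  have : ~ (l.+1 < m \/ m.+1 < l) by move=> far; apply: hfar far hadj.
  lia.
- move: hl hm; have [-> | ->] : m = l.+1 \/ l = m.+1 by lia.
  + by move=> _; apply: hstep.
  + by move=> hl _; apply/adjacent_sym/hstep.
Qed.

Lemma config_adjacent_index C p q : is_config C -> p \in C -> q \in C ->
  adjacent p q <-> `|index p C - index q C| = 1.
Proof.
move=> hC hp hq.
rewrite -{1}(nth_index (origin k) hp) -{1}(nth_index (origin k) hq).
by apply: config_adjacent_nth; rewrite ?index_mem.
Qed.

Lemma walk_rev C p q n : walk C p q n -> walk C q p n.
Proof.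
case=> w [hs h0 hn hin hadj]; exists (rev w).
have nth_rev_w j : j <= n -> nth (origin k) (rev w) j = nth (origin k) w (n - j).
  by move=> hj; rewrite nth_rev hs ?subSS // ltnS.
split.
- by rewrite size_rev.
- by rewrite nth_rev_w ?subn0.
- by rewrite nth_rev_w ?subnn.
- by move=> j hj; rewrite nth_rev_w //; apply: hin; rewrite leq_subr.
- move=> j hj; rewrite !nth_rev_w ?(ltnW hj) //; apply: adjacent_sym.
  have -> : n - j = (n - j.+1).+1 by lia.
  by apply: hadj; lia.
Qed.

Lemma walk_index_dist_lb C p q n : is_config C -> walk C p q n ->
  `|index p C - index q C| <= n.
Proof.
move=> hC [w [_ h0 hn hin hadj]].
suff dist_j j : j <= n -> `|index p C - index (nth (origin k) w j) C| <= j.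
  by have := dist_j n (leqnn n); rewrite hn.
elim: j => [|j IH] hj; first by rewrite h0; lia.
have := config_adjacent_index hC (hin j (ltnW hj)) (hin j.+1 hj).
by move=> /iffLR /(_ (hadj j hj)); have := IH (ltnW hj); lia.
Qed.

Lemma walk_nth_up C i j : is_config C -> i <= j -> j < size C ->
  walk C (nth (origin k) C i) (nth (origin k) C j) (j - i).
Proof.
move=> hC hij hj.
exists (mkseq (fun x => nth (origin k) C (i + x)) (j - i).+1); split.
- by rewrite size_mkseq.
- by rewrite nth_mkseq // addn0.
- by rewrite nth_mkseq // subnKC.
- move=> x hx; rewrite nth_mkseq ?ltnS //; apply: mem_nth.
  by apply: leq_trans hj; lia.
- move=> x hx; rewrite !nth_mkseq ?ltnS ?(ltnW hx) // addnS.
  apply/config_adjacent_nth => //; lia.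
Qed.

Lemma walk_config C p q : is_config C -> p \in C -> q \in C ->
  walk C p q `|index p C - index q C|.
Proof.
move=> hC; wlog hle : p q / index p C <= index q C => [wlog_le hp hq | hp hq].
  case: (leqP (index p C) (index q C)) => [le_pq | /ltnW le_qp]; first exact: wlog_le.
  by rewrite distnC; apply/walk_rev/wlog_le.
have := walk_nth_up hC hle; rewrite index_mem !nth_index // => /(_ hq).
by rewrite distnEr.
Qed.

Lemma dC_min_walk C p q : connected_in C p q ->
  walk C p q (dC C p q) /\ forall n, walk C p q n -> dC C p q <= n.
Proof.
move=> hpq; rewrite /dC; case: pselect => [conn | //].
by case: ex_minnP => m /asboolP wm min_m; split=> // n wn; apply/min_m/asboolP.
Qed.

Lemma dC_config C p q : is_config C -> p \in C -> q \in C ->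
  connected_in C p q /\ dC C p q = `|index p C - index q C|.
Proof.
move=> hC hp hq; have w := walk_config hC hp hq.
have conn : connected_in C p q by exists `|index p C - index q C|.
split=> //; have [wd min_d] := dC_min_walk conn.
by apply/eqP; rewrite eqn_leq min_d //= (walk_index_dist_lb hC wd).
Qed.

Lemma Mset_config C v t x : is_config C -> v \in C ->
  Mset v t C x <->
  x \in C /\ `|index x C - index (origin k) C| + `|index x C - index v C| <= t.
Proof.
move=> hC hv; have o_C := config_origin hC.
split=> -[hx hd]; split=> //; move: hd;
  by rewrite (dC_config hC o_C hx).2 (dC_config hC hx hv).2; lia.
Qed.

End Configurations.

Section UnitStepMaps.
Variables (P : pred nat) (f : nat -> nat).
Hypothesis P_convex : forall i j l, P i -> P j -> i <= l <= j -> P l.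
Hypothesis f_inj : {in P &, injective f}.
Hypothesis f_step : forall i, P i -> P i.+1 -> `|f i.+1 - f i| = 1.

Lemma unit_step_same_dir i : P i -> P i.+2 ->
  f i < f i.+1 <-> f i.+1 < f i.+2.
Proof.
move=> Pi Pi2; have Pi1 : P i.+1 by apply: (P_convex Pi Pi2); rewrite leqnSn /=.
have : f i.+2 <> f i by move/(f_inj Pi2 Pi); lia.
by have := f_step Pi Pi1; have := f_step Pi1 Pi2; lia.
Qed.

Lemma unit_step_dir_const d i : P i -> P (i + d).+1 ->
  f i < f i.+1 <-> f (i + d) < f (i + d).+1.
Proof.
elim: d => [|d IH] Pi Pid; first by rewrite addn0.
have Pid' : P (i + d).+1 by apply: (P_convex Pi Pid); lia.
rewrite (IH Pi Pid') addnS; apply: unit_step_same_dir; last by rewrite -addnS.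
by apply: (P_convex Pi Pid); lia.
Qed.

Lemma unit_step_monotone :
  (forall i, P i -> P i.+1 -> f i < f i.+1) \/
  (forall i, P i -> P i.+1 -> f i.+1 < f i).
Proof.
case: (pselect (exists i, [/\ P i, P i.+1 & f i < f i.+1])).
  move=> [a [Pa Pa1 up_a]].
  left=> j Pj Pj1; case: (leqP a j) => [le_aj | lt_ja].
  + have := @unit_step_dir_const (j - a) a Pa; rewrite subnKC //.
    by move=> /(_ Pj1) /iffLR; apply.
  + have := @unit_step_dir_const (a - j) j Pj; rewrite subnKC ?(ltnW lt_ja) //.
    by move=> /(_ Pa1) /iffRL; apply.
move=> no_up; right=> j Pj Pj1; have := f_step Pj Pj1.
have : ~ f j < f j.+1 by move=> up_j; apply: no_up; exists j.
lia.
Qed.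

Lemma unit_step_increasing_affine :
  (forall i, P i -> P i.+1 -> f i < f i.+1) ->
  forall i j, P i -> P j -> f i + j = f j + i.
Proof.
move=> up i j; wlog le_ij : i j / i <= j => [wlog_le Pi Pj | Pi].
  by case: (leqP i j) => [|/ltnW] le; [apply: wlog_le | apply/esym/wlog_le].
elim: j le_ij => [|j IH]; first by rewrite leqn0 => /eqP ->.
rewrite leq_eqVlt => /orP [/eqP <- // | le_ij] Pj1.
have Pj : P j by apply: (P_convex Pi Pj1); lia.
by have := IH le_ij Pj; have := up j Pj Pj1; have := f_step Pj Pj1; lia.
Qed.

Lemma unit_step_decreasing_affine :
  (forall i, P i -> P i.+1 -> f i.+1 < f i) ->
  forall i j, P i -> P j -> f i + i = f j + j.
Proof.
move=> down i j; wlog le_ij : i j / i <= j => [wlog_le Pi Pj | Pi].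
  by case: (leqP i j) => [|/ltnW] le; [apply: wlog_le | apply/esym/wlog_le].
elim: j le_ij => [|j IH]; first by rewrite leqn0 => /eqP ->.
rewrite leq_eqVlt => /orP [/eqP <- // | le_ij] Pj1.
have Pj : P j by apply: (P_convex Pi Pj1); lia.
by have := IH le_ij Pj; have := down j Pj Pj1; have := f_step Pj Pj1; lia.
Qed.

Lemma unit_step_affine i0 : P i0 ->
  (forall i, P i -> f i + i0 = f i0 + i) \/ (forall i, P i -> f i + i = f i0 + i0).
Proof.
move=> Pi0; case: unit_step_monotone => [up | down]; [left | right] => i Pi.
- by have := unit_step_increasing_affine up Pi0 Pi; lia.
- by have := unit_step_decreasing_affine down Pi0 Pi; lia.
Qed.

End UnitStepMaps.

Section ConsistentExtension.
Variables (k : nat) (C C' : seq (pos k)) (v : pos k) (t : nat).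
Hypotheses (hC : is_config C) (hC' : is_config C') (hv : v \in C)
  (ht : dC C (origin k) v <= t).
Hypothesis hCE : consistent_extension C' (Mset v t C) C.

Let i0 := index (origin k) C.
Let iv := index v C.
Let inM i := (i < size C) && (`|i - i0| + `|i - iv| <= t).
Let g i := index (nth (origin k) C i) C'.

Lemma Mset_index x : Mset v t C x <-> x \in C /\ inM (index x C).
Proof.
rewrite Mset_config // /inM; split=> -[hx hd]; split=> //.
- by rewrite index_mem hx.
- by case/andP: hd.
Qed.

Lemma Mset_nth i : inM i -> Mset v t C (nth (origin k) C i).
Proof.
move=> Mi; have hi : i < size C by case/andP: Mi.
by apply/Mset_index; rewrite mem_nth // index_uniq // config_uniq.
Qed.

Lemma inM_convex i j l : inM i -> inM j -> i <= l <= j -> inM l.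
Proof. by rewrite /inM; lia. Qed.

Lemma inM_origin : inM i0.
Proof.
have o_C := config_origin hC; have [_ d0v] := dC_config hC o_C hv.
by rewrite /inM index_mem o_C /=; move: ht; rewrite d0v; lia.
Qed.

Lemma inM_v : inM iv.
Proof.
have o_C := config_origin hC; have [_ d0v] := dC_config hC o_C hv.
by rewrite /inM index_mem hv /=; move: ht; rewrite d0v; lia.
Qed.

Lemma mem_nth_C' i : inM i -> nth (origin k) C i \in C'.
Proof. by move/Mset_nth; apply: hCE.1. Qed.

Lemma nth_g i : inM i -> nth (origin k) C' (g i) = nth (origin k) C i.
Proof. by move/mem_nth_C'/(nth_index (origin k)). Qed.

Lemma g_size i : inM i -> g i < size C'.
Proof. by move/mem_nth_C'; rewrite index_mem. Qed.

Lemma g_inj : {in inM &, injective g}.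
Proof.
move=> i j Mi Mj /(congr1 (nth (origin k) C')); rewrite !nth_g // => /eqP.
by rewrite nth_uniq ?config_uniq //; [move/eqP | case/andP: Mi | case/andP: Mj].
Qed.

Lemma g_step i : inM i -> inM i.+1 -> `|g i.+1 - g i| = 1.
Proof.
move=> Mi Mi1; apply/(config_adjacent_nth hC' (g_size Mi1) (g_size Mi)).
rewrite !nth_g //.
by apply/config_adjacent_nth => //; [case/andP: Mi1 | case/andP: Mi | lia].
Qed.

Lemma g_affine :
  (forall i, inM i -> g i + i0 = g i0 + i) \/ (forall i, inM i -> g i + i = g i0 + i0).
Proof. exact: (unit_step_affine inM_convex g_inj g_step inM_origin). Qed.

(* The only use of the bond codes: a C'-neighbour of an element of M lies in C. *)
Lemma g_neighbor e j : inM e -> j < size C' -> `|j - g e| = 1 ->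
  exists2 i, i < size C & `|i - e| = 1 /\ (inM i -> g i = j).
Proof.
move=> Me hj hje; set y := nth (origin k) C' j.
have he : e < size C by case/andP: Me.
have e_C : nth (origin k) C e \in C by apply: mem_nth.
have adj_ey : adjacent (nth (origin k) C e) y.
  by rewrite -nth_g //; apply/config_adjacent_nth; rewrite ?g_size //; lia.
have y_C : y \in C.
  by rewrite (bc_adjacent_mem (hCE.2 _ (Mset_nth Me)) adj_ey) mem_nth.
exists (index y C); first by rewrite index_mem.
split.
  have := (config_adjacent_index hC e_C y_C).1 adj_ey.
  by rewrite index_uniq ?config_uniq //; lia.
by move=> _; rewrite /g (nth_index _ y_C) /y index_uniq ?config_uniq.
Qed.

Lemma g_cover_up j : (forall i, inM i -> g i + i0 = g i0 + i) ->
  j < size C' -> `|j - g i0| + `|j - g iv| <= t -> exists2 i, inM i & g i = j.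
Proof.
move=> F hj hjt; have := F iv inM_v; have := inM_origin; have := inM_v.
rewrite /inM => /andP [hiv _] /andP [hi0 _] Fv.
case: (ltnP (j + i0) (g i0)) => [below | not_below].
  have M0 : inM 0 by rewrite /inM; lia.
  have F0 := F 0 M0; have g0_size := g_size M0.
  have [i hi [hi1 g_i]] : exists2 i, i < size C &
      `|i - 0| = 1 /\ (inM i -> g i = (g 0).-1).
    by apply: g_neighbor M0 _ _; lia.
  have Mi : inM i by rewrite /inM; lia.
  by have := F i Mi; have := g_i Mi; lia.
case: (ltnP (j + i0 - g i0) (size C)) => [inside | above].
  have Mi : inM (j + i0 - g i0) by rewrite /inM; lia.
  by exists (j + i0 - g i0) => //; have := F _ Mi; lia.
have Me : inM (size C).-1 by rewrite /inM; lia.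
have Fe := F _ Me.
have [i hi [hie g_i]] : exists2 i, i < size C &
    `|i - (size C).-1| = 1 /\ (inM i -> g i = (g (size C).-1).+1).
  by apply: g_neighbor Me _ _; lia.
have Mi : inM i by rewrite /inM; lia.
by have := F i Mi; have := g_i Mi; lia.
Qed.

Lemma g_cover_down j : (forall i, inM i -> g i + i = g i0 + i0) ->
  j < size C' -> `|j - g i0| + `|j - g iv| <= t -> exists2 i, inM i & g i = j.
Proof.
move=> F hj hjt; have := F iv inM_v; have := inM_origin; have := inM_v.
rewrite /inM => /andP [hiv _] /andP [hi0 _] Fv.
case: (ltnP (g i0 + i0) j) => [below | not_below].
  have M0 : inM 0 by rewrite /inM; lia.
  have F0 := F 0 M0.
  have [i hi [hi1 g_i]] : exists2 i, i < size C &
      `|i - 0| = 1 /\ (inM i -> g i = (g 0).+1).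
    by apply: g_neighbor M0 _ _; lia.
  have Mi : inM i by rewrite /inM; lia.
  by have := F i Mi; have := g_i Mi; lia.
case: (ltnP (g i0 + i0 - j) (size C)) => [inside | above].
  have Mi : inM (g i0 + i0 - j) by rewrite /inM; lia.
  by exists (g i0 + i0 - j) => //; have := F _ Mi; lia.
have Me : inM (size C).-1 by rewrite /inM; lia.
have Fe := F _ Me; have ge_size := g_size Me.
have [i hi [hie g_i]] : exists2 i, i < size C &
    `|i - (size C).-1| = 1 /\ (inM i -> g i = (g (size C).-1).-1).
  by apply: g_neighbor Me _ _; lia.
have Mi : inM i by rewrite /inM; lia.
by have := F i Mi; have := g_i Mi; lia.
Qed.

Lemma g_cover j : j < size C' -> `|j - g i0| + `|j - g iv| <= t ->
  exists2 i, inM i & g i = j.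
Proof. by case: g_affine => F; [apply: g_cover_up | apply: g_cover_down]. Qed.

Lemma g_dist i : inM i -> `|g i - g i0| + `|g i - g iv| = `|i - i0| + `|i - iv|.
Proof.
move=> Mi; have Mv := inM_v.
by case: g_affine => F; have := F i Mi; have := F iv Mv; lia.
Qed.

Lemma origin_C' : origin k \in C'.
Proof. by have := mem_nth_C' inM_origin; rewrite nth_index ?config_origin. Qed.

Lemma v_C' : v \in C'.
Proof. by have := mem_nth_C' inM_v; rewrite nth_index. Qed.

Lemma index_origin_C' : index (origin k) C' = g i0.
Proof. by rewrite /g nth_index ?config_origin. Qed.

Lemma index_v_C' : index v C' = g iv.
Proof. by rewrite /g nth_index. Qed.

Lemma Mset_consistent x : Mset v t C x <-> Mset v t C' x.
Proof.
split=> [hx | ].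
- have [x_C Mx] := (Mset_index x).1 hx.
  apply/(Mset_config _ _ hC' v_C'); split; first exact: hCE.1.
  have gx : index x C' = g (index x C) by rewrite /g nth_index.
  by rewrite index_origin_C' index_v_C' gx g_dist //; case/andP: Mx.
- move/(Mset_config _ _ hC' v_C') => [x_C'].
  have x_idx : index x C' < size C' by rewrite index_mem.
  rewrite index_origin_C' index_v_C' => /(g_cover x_idx) [i Mi gi].
  by rewrite -(nth_index (origin k) x_C') -gi nth_g //; apply: Mset_nth.
Qed.

Lemma consistent_extension_equiv' : equiv' t v C C'.
Proof.
have o_C := config_origin hC.
have reach_C : connected_in C (origin k) v /\ dC C (origin k) v <= t.
  by split=> //; apply: (dC_config hC o_C hv).1.
have reach_C' : connected_in C' (origin k) v /\ dC C' (origin k) v <= t.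
  have [conn ->] := dC_config hC' origin_C' v_C'; split=> //.
  have := g_dist inM_v; have := ht; rewrite (dC_config hC o_C hv).2.
  by rewrite index_origin_C' index_v_C'; lia.
have ai_C : ai v t C = Some (t, v, fun x => Mset v t C x.1 /\ x.2 = bc C x.1).
  by rewrite /ai asboolT.
split; [done | exact: v_C' | | by rewrite ai_C].
rewrite ai_C /ai asboolT //; congr (Some (_, _, _)).
apply: funext => -[w b] /=; apply: propext; split=> -[hw ->].
- by split; [apply/Mset_consistent | apply: hCE.2].
- by have hwC := (Mset_consistent w).2 hw; split=> //; rewrite hCE.2.
Qed.

End ConsistentExtension.

Lemma equiv'_consistent_extension k (C C' : seq (pos k)) v t :
  equiv' t v C C' -> consistent_extension C' (Mset v t C) C.
Proof.
case=> _ _; rewrite /ai; case: ifP => // _; case: ifP => // _ [E] _.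
have Mset_bc w : Mset v t C w -> Mset v t C' w /\ bc C w = bc C' w.
  by move=> hw; rewrite -(congr1 (fun P => P (w, bc C w)) E).
by split=> w /Mset_bc [[]].
Qed.

Theorem theorem3 (k : nat) (hk : k = 2 \/ k = 3) (C C' : seq (pos k))
  (hC : is_config C) (hC' : is_config C') (v : pos k) (hv : v \in C)
  (t : nat) (ht : (dC C (origin k) v <= t)%N) :
  equiv' t v C C' <-> consistent_extension C' (Mset v t C) C.
Proof.
split; [exact: equiv'_consistent_extension | exact: consistent_extension_equiv'].
Qed.
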